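(* Let $T\in\mathcal{L}(\mathcal{H})$ be a nonzero operator with closed range. The following are equivalent: (1) $T$ is hypo-EP; (2) $T^\dagger=(T^\dagger)^2T$; (3) $T^\dagger T=(T^\dagger)^nT^n$ for every $n\ge1$; (4) there is a real number $c\ge0$ such that $\|T^*x\|\le c\|Tx\|$ for all $x\in\mathcal{H}$.
   Context: $\mathcal{H}$ is a Hilbert space, $\mathcal{L}(\mathcal{H})$ the bounded operators on it. For $T$ with closed range, $T^\dagger$ is its Moore–Penrose inverse (unique solution of $TT^\dagger T=T$, $T^\dagger TT^\dagger=T^\dagger$, $(T^\dagger T)^*=T^\dagger T$, $(TT^\dagger)^*=TT^\dagger$). $T$ is hypo-EP if it has closed range and $T^\dagger T-TT^\dagger\ge0$, equivalently $R(T)\subset R(T^* )$, where $R(\cdot)$ denotes range. *)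

From HB Require Import structures.
From mathcomp Require Import all_boot all_order all_algebra.
From mathcomp Require Import reals.
From mathcomp.real_closed Require Import complex.
Set Implicit Arguments. Unset Strict Implicit. Unset Printing Implicit Defensive.
Import Order.TTheory GRing.Theory Num.Theory.
Local Open Scope ring_scope.

Section Hilbert.
Variables (R : realType) (V : lmodType R[i]).

Record hilbert := Hilbert {
  ip : V -> V -> R[i];
  ip_linl : forall (a : R[i]) (x y z : V), ip (a *: x + y) z = a * ip x z + ip y z;
  ip_conjsym : forall x y : V, ip y x = Num.conj (ip x y);
  ip_ge0 : forall x : V, 0 <= ip x x;
  ip_def : forall x : V, ip x x = 0 -> x = 0;
  ip_complete : forall u : nat -> V,
    (forall e : R, 0 < e -> exists N : nat, forall m n : nat, (N <= m)%N -> (N <= n)%N ->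
       Num.sqrt (complex.Re (ip (u m - u n) (u m - u n))) < e) ->
    exists l : V, forall e : R, 0 < e -> exists N : nat, forall n : nat, (N <= n)%N ->
       Num.sqrt (complex.Re (ip (u n - l) (u n - l))) < e
}.

Variable H : hilbert.

Definition hnorm (x : V) : R := Num.sqrt (complex.Re (ip H x x)).

Definition hconverges (u : nat -> V) (l : V) : Prop :=
  forall e : R, 0 < e -> exists N : nat, forall n : nat, (N <= n)%N -> hnorm (u n - l) < e.

(* closed subsets (sequentially closed = closed in a metric space) *)
Definition hclosed (P : V -> Prop) : Prop :=
  forall (u : nat -> V) (l : V), (forall n, P (u n)) -> hconverges u l -> P l.

Definition range (T : V -> V) : V -> Prop := fun y => exists x, T x = y.

Definition closed_range (T : V -> V) : Prop := hclosed (range T).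

Definition bounded_op (T : V -> V) : Prop :=
  (forall (a : R[i]) (x y : V), T (a *: x + y) = a *: T x + T y) /\
  exists M : R, forall x : V, hnorm (T x) <= M * hnorm x.

Definition is_adjoint (T A : V -> V) : Prop :=
  bounded_op A /\ forall x y : V, ip H (T x) y = ip H x (A y).

Definition self_adjoint (T : V -> V) : Prop :=
  forall x y : V, ip H (T x) y = ip H x (T y).

Definition is_MP_inverse (T S : V -> V) : Prop :=
  [/\ bounded_op S,
      forall x, T (S (T x)) = T x,
      forall x, S (T (S x)) = S x,
      self_adjoint (S \o T) &
      self_adjoint (T \o S)].

Definition positive_op (A : V -> V) : Prop := forall x : V, 0 <= ip H (A x) x.

Definition hypoEP (T : V -> V) : Prop :=
  closed_range T /\
  exists S : V -> V, is_MP_inverse T S /\ positive_op (fun x => S (T x) - T (S x)).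

End Hilbert.

From HB Require Import structures.
From mathcomp Require Import all_boot all_order all_algebra.
From mathcomp Require Import reals.
From mathcomp.real_closed Require Import complex.
Import Order.TTheory GRing.Theory Num.Theory.
Local Open Scope ring_scope.

(* Let P = T^dagger T and Q = T T^dagger: they are the orthogonal projections
   onto R(T^* ) and R(T), and every condition is equivalent to R(T) <= R(T^* ),
   i.e. P Q = Q, or equivalently (taking adjoints) Q P = Q.
   If P Q = Q P = Q then P - Q is itself an orthogonal projection, hence
   positive. Conversely, for z in R(T) positivity of P - Q at z - P z forces
   Q P z = z, and a vector with Q P z = z is fixed by P.
   (2) says T^dagger = T^dagger P, which is Q P = Q once T is applied; (3)
   follows from (2) by induction and its case n = 2 gives Q P z = z directly.
   Finally (4) says N(T) <= N(T^* ), i.e. T^* = T^* P, the adjoint form of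
   P T = T. *)

Section Hilbert.
Context {R : realType} {V : lmodType R[i]} {H : hilbert V}.

Lemma ipBl x y z : ip H (x - y) z = ip H x z - ip H y z.
Proof. exact: (zmod_morphism_linear (fun a u v => ip_linl H a u v z)). Qed.

Lemma ipBr x y z : ip H z (x - y) = ip H z x - ip H z y.
Proof. by rewrite !(ip_conjsym H _ z) ipBl rmorphB. Qed.

Lemma ip0l z : ip H 0 z = 0.
Proof. by have := ipBl 0 0 z; rewrite !subrr. Qed.

Lemma ip_extl a b : (forall y, ip H a y = ip H b y) -> a = b.
Proof.
move=> eq_ab; apply/eqP; rewrite -subr_eq0; apply/eqP/(@ip_def _ _ H).
by rewrite ipBl eq_ab subrr.
Qed.

Lemma ip_extr a b : (forall y, ip H y a = ip H y b) -> a = b.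
Proof.
by move=> eq_ab; apply: ip_extl => y; rewrite ip_conjsym eq_ab -ip_conjsym.
Qed.

Lemma hnorm_ge0 x : 0 <= hnorm H x.
Proof. exact: sqrtr_ge0. Qed.

Lemma hnorm0 : hnorm H 0 = 0.
Proof. by rewrite /hnorm ip0l sqrtr0. Qed.

Lemma hnorm_le0 x : hnorm H x <= 0 -> x = 0.
Proof.
rewrite /hnorm => le0; have ge0 := ip_ge0 H x; apply: (@ip_def _ _ H).
have : Num.sqrt (complex.Re (ip H x x)) == 0 by rewrite eq_le le0 sqrtr_ge0.
rewrite sqrtr_eq0 => Rele0.
have Re0 : complex.Re (ip H x x) = 0.
  by apply/le_anti; rewrite Rele0; move: ge0; rewrite lecE => /andP[].
by rewrite [ip H x x]complexE Re0 (ger0_Im ge0) mulr0 addr0.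
Qed.

Lemma bounded_op_ge0 {f : V -> V} : bounded_op H f ->
  exists2 M : R, 0 <= M & forall x, hnorm H (f x) <= M * hnorm H x.
Proof.
case=> _ [M leM]; exists `|M|; first exact: normr_ge0.
by move=> x; apply: le_trans (leM x) _; rewrite ler_wpM2r ?hnorm_ge0 ?ler_norm.
Qed.

Lemma self_adjoint_absorb {A B : V -> V} :
  self_adjoint H A -> self_adjoint H B ->
  (forall x, B (A x) = A x) <-> (forall x, A (B x) = A x).
Proof.
move=> sA sB; split=> BA x; apply: ip_extl => y.
  by rewrite sA sB BA sA.
by rewrite sB sA BA -sA.
Qed.

Definition orth_proj (E : V -> V) :=
  [/\ linear E, self_adjoint H E & forall x, E (E x) = E x].

Lemma ip_orth_proj {E : V -> V} :
  orth_proj E -> forall x, ip H (E x) x = ip H (E x) (E x).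
Proof. by case=> _ sE idE x; rewrite -{1}idE sE. Qed.

(* w = z - P z is killed by P and by Q, so it is orthogonal to R(P) and R(Q);
   as z = Q (P z), w lies in R(Q) + R(P), hence is orthogonal to itself. *)
Lemma orth_proj_fix {P Q : V -> V} {z : V} :
  orth_proj P -> orth_proj Q -> Q (P z) = z -> P z = z.
Proof.
case=> linP sP idP [linQ sQ idQ] QPz.
set w := z - P z.
have Pw : P w = 0 by rewrite (zmod_morphism_linear linP) idP subrr.
have Qw : Q w = 0 by rewrite (zmod_morphism_linear linQ) -{1}QPz idQ subrr.
have : ip H w w = 0 by rewrite {2}/w ipBr -{1}QPz -sP -sQ Qw Pw !ip0l subrr.
by move/(@ip_def _ _ H)/eqP; rewrite subr_eq0 => /eqP.
Qed.

Lemma orth_projB {P Q : V -> V} :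
  orth_proj P -> orth_proj Q -> (forall x, P (Q x) = Q x) ->
  orth_proj (fun x => P x - Q x).
Proof.
move=> [linP sP idP] [linQ sQ idQ] PQ.
have QP := (self_adjoint_absorb sQ sP).1 PQ.
split=> [a x y | x y | x].
- by rewrite linP linQ scalerBr opprD addrACA.
- by rewrite !ipBl !ipBr sP sQ.
- rewrite !(zmod_morphism_linear linP) !(zmod_morphism_linear linQ).
  by rewrite idP idQ PQ QP subrr subr0.
Qed.

Lemma MP_inverse_unique {T S1 S2 : V -> V} :
  is_MP_inverse H T S1 -> is_MP_inverse H T S2 -> forall x, S1 x = S2 x.
Proof.
case=> _ TST1 STS1 sP1 sQ1 [_ TST2 STS2 sP2 sQ2].
have eqST x : S1 (T x) = S2 (T x).
  have P2P1 := (self_adjoint_absorb sP1 sP2).2 (fun y => congr1 S1 (TST2 y)).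
  by have /= <- := P2P1 x; rewrite TST1.
have eqTS x : T (S1 x) = T (S2 x).
  have Q1Q2 := (self_adjoint_absorb sQ1 sQ2).1 (fun y => TST2 (S1 y)).
  by have /= <- := Q1Q2 x; rewrite TST1.
by move=> x; rewrite -STS1 eqST eqTS STS2.
Qed.

(* P = T^dagger T fixes R(T), i.e. R(T) <= R(P) = R(T^* ). *)
Definition range_in_coimage (T S : V -> V) := forall y, S (T (T y)) = T y.

Section MoorePenrose.
Context {T S : V -> V} (linT : linear T) (mpS : is_MP_inverse H T S).

Let boundS : bounded_op H S. Proof. by case: mpS. Qed.
Let linS : linear S := boundS.1.
Let TST x : T (S (T x)) = T x. Proof. by case: mpS. Qed.
Let STS x : S (T (S x)) = S x. Proof. by case: mpS. Qed.
Let sP x y : ip H (S (T x)) y = ip H x (S (T y)).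
Proof. by case: mpS => _ _ _ + _; apply. Qed.
Let sQ x y : ip H (T (S x)) y = ip H x (T (S y)).
Proof. by case: mpS => _ _ _ _ +; apply. Qed.

Lemma MP_orth_projl : orth_proj (fun x => S (T x)).
Proof. by split=> [a x y | | x]; rewrite ?linT ?linS ?TST. Qed.

Lemma MP_orth_projr : orth_proj (fun x => T (S x)).
Proof. by split=> [a x y | | x]; rewrite ?linS ?linT ?TST. Qed.

Lemma range_in_coimageE :
  range_in_coimage T S <-> forall x, T (S (S (T x))) = T (S x).
Proof.
split=> [fixR | QP y].
  by apply/(self_adjoint_absorb sQ sP) => x; exact: fixR (S x).
by move: ((self_adjoint_absorb sQ sP).2 QP (T y)) => /=; rewrite !TST.
Qed.

Lemma range_in_coimage_ge0 :
  range_in_coimage T S -> positive_op H (fun x => S (T x) - T (S x)).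
Proof.
move=> fixR x.
have projPQ := orth_projB MP_orth_projl MP_orth_projr (fun x => fixR (S x)).
by have /= -> := ip_orth_proj projPQ x; exact: ip_ge0.
Qed.

Lemma ge0_range_in_coimage :
  positive_op H (fun x => S (T x) - T (S x)) -> range_in_coimage T S.
Proof.
move=> PQge0 y; apply: (orth_proj_fix MP_orth_projl MP_orth_projr) => /=.
set w := T y - S (T (T y)).
have Pw : S (T w) = 0.
  by rewrite (zmod_morphism_linear linT) (zmod_morphism_linear linS) TST subrr.
have Qw : T (S w) = 0.
  have := PQge0 w; rewrite /= Pw ipBl ip0l sub0r.
  rewrite (ip_orth_proj MP_orth_projr) oppr_ge0 => le0.
  by apply: (@ip_def _ _ H); apply/le_anti; rewrite le0 ip_ge0.
move/eqP: Qw; rewrite (zmod_morphism_linear linS) (zmod_morphism_linear linT).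
by rewrite TST subr_eq0 => /eqP <-.
Qed.

Lemma hypoEP_iff_range_in_coimage :
  closed_range H T -> hypoEP H T <-> range_in_coimage T S.
Proof.
move=> clT; split=> [[_ [S' [mpS' PQ'ge0]]] | fixR].
  apply: ge0_range_in_coimage => x.
  by rewrite /= -!(MP_inverse_unique mpS' mpS); exact: PQ'ge0.
by split=> //; exists S; split=> //; exact: range_in_coimage_ge0.
Qed.

Lemma range_in_coimage_iff_sq :
  range_in_coimage T S <-> forall x, S x = S (S (T x)).
Proof.
rewrite range_in_coimageE; split=> [QP x | SP x].
  by rewrite -[LHS]STS -QP STS.
by rewrite -SP.
Qed.

Lemma range_in_coimage_iff_pow : range_in_coimage T S <->
  forall n, (1 <= n)%N -> forall x, S (T x) = iter n S (iter n T x).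
Proof.
split=> [fixR | pow y].
  have SP := range_in_coimage_iff_sq.1 fixR.
  case=> // n _; elim: n => // n IH x.
  rewrite IH [in RHS]iterSr [iter n.+2 T x]iterS [in RHS]iterSr.
  by rewrite -SP -iterSr.
have /= P2 := pow 2%N isT y.
by apply: (orth_proj_fix MP_orth_projl MP_orth_projr) => /=; rewrite -P2 TST.
Qed.

Lemma range_in_coimage_iff_adjoint {Ts : V -> V} : is_adjoint H T Ts ->
  range_in_coimage T S <-> forall x, Ts (S (T x)) = Ts x.
Proof.
case=> _ adj; split=> [fixR x | TsP y].
  by apply: ip_extr => y; rewrite -!adj -sP fixR.
by apply: ip_extl => x; rewrite sP adj TsP -adj.
Qed.

Lemma adjoint_MP_bound_iff {Ts : V -> V} : is_adjoint H T Ts ->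
  (forall x, Ts (S (T x)) = Ts x) <->
  exists c : R, 0 <= c /\ forall x, hnorm H (Ts x) <= c * hnorm H (T x).
Proof.
case=> boundTs _; split=> [TsP | [c [_ le_c]] x].
  have [M1 M1_ge0 leM1] := bounded_op_ge0 boundTs.
  have [M2 M2_ge0 leM2] := bounded_op_ge0 boundS.
  exists (M1 * M2); split=> [|x]; first exact: mulr_ge0.
  rewrite -TsP -mulrA; apply: le_trans (leM1 _) _.
  by rewrite ler_wpM2l.
have : Ts (x - S (T x)) = 0.
  apply: hnorm_le0; apply: le_trans (le_c _) _.
  by rewrite (zmod_morphism_linear linT) TST subrr hnorm0 mulr0.
by move/eqP; rewrite (zmod_morphism_linear boundTs.1) subr_eq0 => /eqP ->.
Qed.

End MoorePenrose.

End Hilbert.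

Theorem mainTheorem12 (R : realType) (V : lmodType R[i]) (H : hilbert V)
  (T Tdag Tstar : V -> V) :
  bounded_op H T -> (exists x : V, T x != 0) -> closed_range H T ->
  is_MP_inverse H T Tdag -> is_adjoint H T Tstar ->
  [/\ (hypoEP H T <-> (forall x, Tdag x = Tdag (Tdag (T x)))),
      (hypoEP H T <-> (forall n : nat, (1 <= n)%N ->
                          forall x, Tdag (T x) = iter n Tdag (iter n T x))) &
      (hypoEP H T <-> (exists c : R, 0 <= c /\
                          forall x, hnorm H (Tstar x) <= c * hnorm H (T x)))].
Proof.
move=> [linT _] _ clT mpS adjT.
have hypoEP_iff := hypoEP_iff_range_in_coimage linT mpS clT.
split; rewrite hypoEP_iff.
- exact: (range_in_coimage_iff_sq mpS).
- exact: (range_in_coimage_iff_pow linT mpS).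
- rewrite (range_in_coimage_iff_adjoint mpS adjT).
  exact: (adjoint_MP_bound_iff linT mpS adjT).
Qed.
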